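(* Let $G$ be an abelian group and $\mathbf{z}_0,\dots,\mathbf{z}_t\in G$, with $\mathbf{z}_0$ of finite order $s$. Suppose there are integers $r_0,\dots,r_t$ with $r_n\mathbf{z}_{n+1}=r_{n+1}\mathbf{z}_n$ and $\gcd(r_n,r_{n+1})=1$ for $0\le n\le t-1$. Then for each $1\le n\le t$, the order of $\mathbf{z}_n$ divides $\operatorname{lcm}\{s r_0, r_1,\dots,r_{n-1}\}$. *)

From mathcomp Require Import all_boot all_order all_algebra.
Set Implicit Arguments. Unset Strict Implicit. Unset Printing Implicit Defensive.
Import Order.TTheory GRing.Theory Num.Theory.
Local Open Scope ring_scope.

(* For x of finite order this is the usual order (least positive m with m x = 0);
   for x of infinite order it is 0. *)
Definition order_of (G : zmodType) (x : G) (o : nat) : Prop :=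
  forall m : int, x *~ m = 0 <-> (o%:Z %| m)%Z.

Definition lcmz_seq (s : seq int) : int := foldr lcmz 1 s.

From mathcomp Require Import all_boot all_order all_algebra.
From Stdlib Require Import Classical.
Set Implicit Arguments. Unset Strict Implicit. Unset Printing Implicit Defensive.
Import Order.TTheory GRing.Theory Num.Theory.
Local Open Scope ring_scope.

(* Put L_m = lcm(s r_0, r_1, ..., r_m). By induction on m, z_m has an
   annihilator K with K r_m | L_m. Indeed, if K z_m = 0 and h = gcd(K, r_(m+1)),
   then K' = (K/h) r_m kills z_(m+1), since r_m z_(m+1) = r_(m+1) z_m and
   (K/h) r_(m+1) is a multiple of K. As r_m and r_(m+1) are coprime,
   K' r_(m+1) is, up to sign, lcm(K r_m, r_(m+1)), which divides L_(m+1).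
   Finally the order of z_(m+1) divides K', which divides K r_m | L_m. *)

Lemma mulrz_abs_eq0 (G : zmodType) (x : G) (m : int) :
  (x *~ m == 0) = (x *+ `|m|%N == 0).
Proof. by case: m => n //; rewrite NegzE mulrNz oppr_eq0. Qed.

Lemma order_of_exists (G : zmodType) (x : G) : exists o : nat, order_of x o.
Proof.
have [torsion|torsion_free] := classic (exists n, (0 < n)%N && (x *+ n == 0)).
- case: (ex_minnP torsion) => o /andP[o_gt0 /eqP xo0] o_min.
  exists o => m; split=> [xm0|/dvdzP[c ->]]; last first.
    by rewrite -mulrzA_C -pmulrn xo0 mul0rz.
  have [u [v Euv]] := Bezoutz m o.
  have xg0 : x *+ gcdn `|m| o = 0.
    change (x *~ gcdz m o = 0).
    by rewrite -Euv mulrzDr -!mulrzA_C xm0 -pmulrn xo0 !mul0rz addr0.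
  have g_gt0 : (0 < gcdn `|m| o)%N by rewrite gcdn_gt0 o_gt0 orbT.
  have g_eq_o : gcdn `|m| o = o.
    apply/eqP; rewrite eqn_leq dvdn_leq ?dvdn_gcdr //=.
    by apply: o_min; rewrite g_gt0 xg0 eqxx.
  by rewrite -g_eq_o; apply: dvdn_gcdl.
- exists 0%N => m; split=> [xm0|]; last by rewrite dvd0z => /eqP ->.
  rewrite dvd0z; apply/negPn/negP => m_neq0; apply: torsion_free.
  by exists `|m|%N; rewrite absz_gt0 m_neq0 -mulrz_abs_eq0 xm0 eqxx.
Qed.

Lemma dvdz_lcm (m n d : int) : (lcmz m n %| d)%Z = (m %| d)%Z && (n %| d)%Z.
Proof. exact: dvdn_lcm. Qed.

Lemma dvdz_lcmz_seq (l : seq int) (d : int) :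
  (lcmz_seq l %| d)%Z = all (fun x => x %| d)%Z l.
Proof. by elim: l => [|x l IHl] /=; rewrite ?dvd1z // dvdz_lcm IHl. Qed.

Lemma dvdz_lcmz_seq_mem (l : seq int) (x : int) :
  x \in l -> (x %| lcmz_seq l)%Z.
Proof.
by move=> xl; move: (dvdzz (lcmz_seq l)); rewrite dvdz_lcmz_seq => /allP; apply.
Qed.

Lemma lcmz_seq_subset (l1 l2 : seq int) :
  {subset l1 <= l2} -> (lcmz_seq l1 %| lcmz_seq l2)%Z.
Proof.
move=> sub12; rewrite dvdz_lcmz_seq.
by apply/allP => x /sub12 /dvdz_lcmz_seq_mem.
Qed.

Lemma dvdz_divgcdM (m n d : int) :
  ((m %/ gcdz m n)%Z * n %| d)%Z = (lcmz m n %| d)%Z.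
Proof.
have [g0|g_neq0] := eqVneq (gcdz m n) 0.
  move: (g0) => /eqP; rewrite gcdz_eq0 => /andP[/eqP-> /eqP->].
  by rewrite div0z mul0r lcmz0.
rewrite -(dvdz_mul2r g_neq0) mulrAC divzK ?dvdz_gcdl //.
rewrite -[in RHS](dvdz_mul2r g_neq0).
have -> : lcmz m n * gcdz m n = `|(m * n)%R|%N.
  by rewrite -PoszM muln_lcm_gcd abszM.
by [].
Qed.

Lemma divz_gcdMr_coprime (a b K : int) :
  coprimez a b -> ((K * a) %/ gcdz (K * a) b)%Z = (K %/ gcdz K b)%Z * a.
Proof.
move=> cop_ab; rewrite divz_mulAC ?dvdz_gcdl //.
by rewrite gcdzC Gauss_gcdzl 1?gcdzC // /coprimez gcdzC.
Qed.

Lemma mulrz_divgcd_eq0 (G : zmodType) (x y : G) (a b K : int) :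
  y *~ a = x *~ b -> x *~ K = 0 -> y *~ ((K %/ gcdz K b)%Z * a) = 0.
Proof.
move=> yx xK0; rewrite -mulrzA_C yx mulrzA_C mulrC -mulz_divCA_gcd.
by rewrite mulrzA xK0 mul0rz.
Qed.

Definition lcm_prefix (s : nat) (r : nat -> int) (m : nat) : int :=
  lcmz_seq ((s%:Z * r 0%N) :: [seq r i | i <- iota 1 m]).

Lemma lcm_prefix_dvdS (s : nat) (r : nat -> int) (m : nat) :
  (lcm_prefix s r m %| lcm_prefix s r m.+1)%Z.
Proof.
apply: lcmz_seq_subset => x x_in.
by rewrite -[m.+1]addn1 iotaD map_cat -cat_cons mem_cat x_in.
Qed.

Lemma dvdz_lcm_prefix (s : nat) (r : nat -> int) (m : nat) :
  (r m.+1 %| lcm_prefix s r m.+1)%Z.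
Proof.
by apply: dvdz_lcmz_seq_mem; rewrite inE map_f ?orbT // mem_iota ltnSn.
Qed.

Section AnnihilatorChain.

Variables (G : zmodType) (t : nat) (z : nat -> G) (s : nat) (r : nat -> int).
Hypothesis zs0 : z 0%N *~ s%:Z = 0.
Hypothesis hrel : forall n : nat, (n < t)%N -> z n.+1 *~ r n = z n *~ r n.+1.
Hypothesis hgcd : forall n : nat, (n < t)%N -> gcdz (r n) (r n.+1) = 1.

Local Notation L := (lcm_prefix s r).

Lemma annihilator_step (m : nat) (K : int) :
  (m < t)%N -> z m *~ K = 0 -> (K * r m %| L m)%Z ->
  exists2 K', z m.+1 *~ K' = 0 & (K' %| L m)%Z && (K' * r m.+1 %| L m.+1)%Z.
Proof.
move=> lt_mt zK0 dvd_KrL.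
have cop : coprimez (r m) (r m.+1) by rewrite /coprimez hgcd.
exists ((K %/ gcdz K (r m.+1))%Z * r m).
  exact: mulrz_divgcd_eq0 (hrel lt_mt) zK0.
rewrite -divz_gcdMr_coprime // dvdz_divgcdM dvdz_lcm dvdz_lcm_prefix andbT.
apply/andP; split; last exact: dvdz_trans dvd_KrL (lcm_prefix_dvdS _ _ _).
apply: dvdz_trans dvd_KrL.
by rewrite -[X in (_ %| X)%Z](divzK (dvdz_gcdl _ (r m.+1))) dvdz_mulr.
Qed.

Lemma annihilator_chain (m : nat) :
  (m <= t)%N -> exists2 K, z m *~ K = 0 & (K * r m %| L m)%Z.
Proof.
elim: m => [|m IHm] le_mt; first by exists s%:Z; rewrite // dvdz_lcml.
have [K zK0 dvd_KrL] := IHm (ltnW le_mt).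
by have [K' zK'0 /andP[_ ?]] := annihilator_step le_mt zK0 dvd_KrL; exists K'.
Qed.

End AnnihilatorChain.

Theorem lemma3p3 (G : zmodType) (t : nat) (z : nat -> G) (s : nat) (r : nat -> int)
  (hs : (0 < s)%N) (hz0 : order_of (z 0%N) s)
  (hrel : forall n : nat, (n < t)%N -> z n.+1 *~ r n = z n *~ r n.+1)
  (hgcd : forall n : nat, (n < t)%N -> gcdz (r n) (r n.+1) = 1) :
  forall n : nat, (1 <= n <= t)%N ->
    exists o : nat, order_of (z n) o /\
      (o%:Z %| lcmz_seq ((s%:Z * r 0%N) :: [seq r i | i <- iota 1 n.-1]))%Z.
Proof.
case=> [|m] // /andP[_ lt_mt].
have zs0 : z 0%N *~ s%:Z = 0 by apply/hz0.
have [K zK0 dvd_KrL] := annihilator_chain zs0 hrel hgcd (ltnW lt_mt).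
have [K' zK'0 /andP[dvd_K'L _]] := annihilator_step hrel hgcd lt_mt zK0 dvd_KrL.
have [o ho] := order_of_exists (z m.+1).
by exists o; split; last exact: dvdz_trans ((ho K').1 zK'0) dvd_K'L.
Qed.
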